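(* Let $m,n\ge1$, $0\le r\le m$, $A=(A_0,\dots,A_n)\in\mathbb{S}_m(\mathbb{Q})^{n+1}$ and $c\in\mathbb{Q}^n$. Suppose that $\mathcal{F}_r(A,c)\neq\emptyset$, and let $p\in\mathcal{R}_r(A,c)$. Then every $x^*\in\mathcal{F}_r(A,c)$ with $\operatorname{rank}A(x^* )=p$ is a local minimizer of $\ell_c(x)=c^Tx$ on $\mathcal{D}_p\cap\mathbb{R}^n$.
   Context: $\mathbb{S}_m(\mathbb{Q})$ denotes the symmetric $m\times m$ rational matrices; $A(x)=A_0+x_1A_1+\cdots+x_nA_n$. The spectrahedron is $\mathscr{S}=\{x\in\mathbb{R}^n: A(x)\succeq0\}$ (positive semidefinite), and $\mathcal{D}_p=\{x\in\mathbb{C}^n:\operatorname{rank}A(x)\le p\}$. $\mathcal{F}_r(A,c)$ is the set of minimizers of $\ell_c$ on $\mathscr{S}\cap\mathcal{D}_r$ (i.e. points $x^*$ of this set with $\ell_c(x^* )\le\ell_c(x)$ for all $x$ in it), and $\mathcal{R}_r(A,c)=\{p: 0\le p\le r,\ \exists x\in\mathcal{F}_r(A,c),\ \operatorname{rank}A(x)=p\}$. A point $x^*\in S\subset\mathbb{R}^n$ is a local minimizer of $\ell_c$ on $S$ if there is a Euclidean open set $U\ni x^*$ with $\ell_c(x^* )\le\ell_c(x)$ for all $x\in U\cap S$. *)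

From HB Require Import structures.
From mathcomp Require Import all_boot all_order all_algebra.
From mathcomp Require Import reals.
Set Implicit Arguments. Unset Strict Implicit. Unset Printing Implicit Defensive.
Import Order.TTheory GRing.Theory Num.Theory.
Local Open Scope ring_scope.

Definition sym_rat (m : nat) (M : 'M[rat]_m) : Prop := M^T = M.

(* Affine pencil A(x) = A_0 + x_1 A_1 + ... + x_n A_n, evaluated at a real x,
   with A : 'I_n.+1 -> 'M[rat]_m (A ord0 = A_0, A (lift ord0 i) = A_{i+1}). *)
Definition pencil (R : realType) (m n : nat) (A : 'I_n.+1 -> 'M[rat]_m)
  (x : 'rV[R]_n) : 'M[R]_m :=
  map_mx ratr (A ord0) + \sum_(i < n) x 0 i *: map_mx ratr (A (lift ord0 i)).

Definition psd (R : realType) (m : nat) (M : 'M[R]_m) : Prop :=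
  forall v : 'cV[R]_m, 0 <= (v^T *m M *m v) 0 0.

Definition lin_obj (R : realType) (n : nat) (c : 'rV[rat]_n) (x : 'rV[R]_n) : R :=
  \sum_(i < n) ratr (c 0 i) * x 0 i.

Definition feas_r (R : realType) (m n : nat) (A : 'I_n.+1 -> 'M[rat]_m)
  (r : nat) (x : 'rV[R]_n) : Prop :=
  psd (pencil A x) /\ (\rank (pencil A x) <= r)%N.

Definition F_r (R : realType) (m n : nat) (A : 'I_n.+1 -> 'M[rat]_m)
  (c : 'rV[rat]_n) (r : nat) (x : 'rV[R]_n) : Prop :=
  feas_r A r x /\ forall y : 'rV[R]_n, feas_r A r y -> lin_obj c x <= lin_obj c y.

Definition R_r (R : realType) (m n : nat) (A : 'I_n.+1 -> 'M[rat]_m)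
  (c : 'rV[rat]_n) (r p : nat) : Prop :=
  (p <= r)%N /\ exists x : 'rV[R]_n, F_r A c r x /\ \rank (pencil A x) = p.

(* Local minimizer of l_c on a set S ⊆ R^n: some Euclidean open set U containing xs
   with l_c(xs) <= l_c(x) on U ∩ S; equivalently an open box around xs. *)
Definition local_min (R : realType) (n : nat) (c : 'rV[rat]_n)
  (S : 'rV[R]_n -> Prop) (xs : 'rV[R]_n) : Prop :=
  S xs /\ exists2 e : R, 0 < e &
    forall x : 'rV[R]_n, (forall i, `|x 0 i - xs 0 i| < e) -> S x ->
      lin_obj c xs <= lin_obj c x.

From HB Require Import structures.
From mathcomp Require Import all_boot all_order all_algebra.
From mathcomp Require Import reals.
From mathcomp Require Import ring lra.
Set Implicit Arguments. Unset Strict Implicit. Unset Printing Implicit Defensive.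
Import Order.TTheory GRing.Theory Num.Theory.
Local Open Scope ring_scope.

(* Positive
   semidefiniteness is stable under small symmetric perturbations that do not
   increase the rank: the quadratic form of a psd matrix M is coercive on the
   row space V of M, so a nearby N is positive definite on V; if moreover
   rank N <= dim V then V ∩ ker N = 0 forces V + ker N to be the whole space,
   and N is psd.  Hence every point of D_p near x0 lies in S ∩ D_r. *)

Section QuadraticForms.
Variables (R : realFieldType) (m : nat).
Implicit Types (B M N : 'M[R]_m) (x y u v w z : 'rV[R]_m).

Definition bform B x y : R := (x *m B *m y^T) 0 0.
Definition sqnorm x : R := (x *m x^T) 0 0.
Definition mx_l1 B : R := \sum_i \sum_j `|B i j|.

Lemma bformE B x y : bform B x y = \sum_j \sum_i x 0 i * B i j * y 0 j.
Proof.
rewrite /bform mxE; apply: eq_bigr => j _; rewrite mxE mulr_suml.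
by apply: eq_bigr => i _; rewrite mxE.
Qed.

Lemma bformDl B x1 x2 y : bform B (x1 + x2) y = bform B x1 y + bform B x2 y.
Proof. by rewrite /bform !mulmxDl mxE. Qed.

Lemma bformDr B x y1 y2 : bform B x (y1 + y2) = bform B x y1 + bform B x y2.
Proof. by rewrite /bform linearD /= mulmxDr mxE. Qed.

Lemma bformZl B a x y : bform B (a *: x) y = a * bform B x y.
Proof. by rewrite /bform -!scalemxAl mxE. Qed.

Lemma bformZr B a x y : bform B x (a *: y) = a * bform B x y.
Proof. by rewrite /bform linearZ /= -scalemxAr mxE. Qed.

Lemma bformBl N M x y : bform (N - M) x y = bform N x y - bform M x y.
Proof. by rewrite /bform mulmxBr mulmxBl !mxE. Qed.

Lemma bform_kerl B k y : k *m B = 0 -> bform B k y = 0.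
Proof. by move=> kB; rewrite /bform kB mul0mx mxE. Qed.

Lemma bform_sym B x y : B^T = B -> bform B x y = bform B y x.
Proof.
move=> symB; rewrite /bform.
transitivity ((x *m B *m y^T)^T 0 0); first by rewrite [RHS]mxE.
by rewrite !trmx_mul trmxK symB mulmxA.
Qed.

Lemma sqnormE x : sqnorm x = \sum_i x 0 i ^+ 2.
Proof. by rewrite /sqnorm mxE; apply: eq_bigr => i _; rewrite mxE expr2. Qed.

Lemma sqnorm_ge0 x : 0 <= sqnorm x.
Proof. by rewrite sqnormE; apply: sumr_ge0 => i _; apply: sqr_ge0. Qed.

Lemma sqr_le_sqnorm x i : x 0 i ^+ 2 <= sqnorm x.
Proof.
by rewrite sqnormE (bigD1 i) //= lerDl; apply: sumr_ge0 => k _; apply: sqr_ge0.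
Qed.

Lemma sqnorm_eq0 x : (sqnorm x == 0) = (x == 0).
Proof.
apply/idP/eqP=> [|->]; last by rewrite sqnormE big1 // => i _; rewrite mxE expr0n.
rewrite sqnormE psumr_eq0 => [/allP x0|i _]; last exact: sqr_ge0.
apply/rowP => i; apply/eqP; rewrite mxE -sqrf_eq0.
by have := x0 i (mem_index_enum i).
Qed.

Lemma mx_l1_ge0 B : 0 <= mx_l1 B.
Proof. by apply: sumr_ge0 => i _; apply: sumr_ge0 => j _; apply: normr_ge0. Qed.

Lemma norm_entry_le_mx_l1 B i j : `|B i j| <= mx_l1 B.
Proof.
rewrite /mx_l1 (bigD1 i) //= (bigD1 j) //= -addrA lerDl.
by apply: addr_ge0; apply: sumr_ge0 => *; [|apply: sumr_ge0 => *];
  apply: normr_ge0.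
Qed.

Lemma mx_l1_le_entry B e : (forall i j, `|B i j| <= e) ->
  mx_l1 B <= (m * m)%:R * e.
Proof.
move=> Be; apply: (@le_trans _ _ (\sum_(i < m) \sum_(j < m) e)).
  by apply: ler_sum => i _; apply: ler_sum => j _.
by rewrite !sumr_const !card_ord -mulrnA mulr_natl.
Qed.

(* Each term is bounded through 2|a||b| <= a^2 + b^2. *)
Lemma norm_bform_le B x y : `|bform B x y| <= mx_l1 B * (sqnorm x + sqnorm y).
Proof.
rewrite bformE /mx_l1 exchange_big /= mulr_suml.
apply: le_trans (ler_norm_sum _ _ _) _; apply: ler_sum => j _.
rewrite mulr_suml; apply: le_trans (ler_norm_sum _ _ _) _.
apply: ler_sum => i _; rewrite !normrM mulrAC mulrC.
apply: ler_wpM2l; first exact: normr_ge0.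
have := sqr_le_sqnorm x j; have := sqr_le_sqnorm y i.
rewrite -[x 0 j ^+ 2]real_normK ?num_real // -[y 0 i ^+ 2]real_normK ?num_real //.
by have := normr_ge0 (x 0 j); have := normr_ge0 (y 0 i); nra.
Qed.

Lemma sqnorm_mulmx_le z (G : 'M[R]_m) :
  sqnorm (z *m G) <= 2 * mx_l1 (G *m G^T) * sqnorm z.
Proof.
have -> : sqnorm (z *m G) = bform (G *m G^T) z z.
  by rewrite /sqnorm /bform trmx_mul !mulmxA.
apply: le_trans (ler_norm _) _; apply: le_trans (norm_bform_le _ _ _) _.
by rewrite (mulrC 2) -mulrA mulr_natl mulr2n.
Qed.

Lemma kermx_cap_eq0 (X B : 'M[R]_m) :
  (forall w, (w <= X)%MS -> w *m B = 0 -> w = 0) ->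
  \rank (X :&: kermx B)%MS = 0%N.
Proof.
move=> XB; apply/eqP; rewrite mxrank_eq0; apply/eqP/row_matrixP => i.
rewrite row0; apply: XB; first exact: submx_trans (row_sub i _) (capmxSl _ _).
by apply/sub_kermxP; apply: submx_trans (row_sub i _) (capmxSr _ _).
Qed.

Section NonnegativeForm.
Variable M : 'M[R]_m.
Hypotheses (symM : M^T = M) (M_ge0 : forall u, 0 <= bform M u u).

(* Expand the nonnegativity of the form at C u - uM, with C = 2 |M|_1 + 1. *)
Lemma sqnorm_mulmx_le_bform u :
  sqnorm (u *m M) <= (2 * mx_l1 M + 1) * bform M u u.
Proof.
set z := u *m M; set C := 2 * mx_l1 M + 1.
have C_gt0 : 0 < C by have := mx_l1_ge0 M; rewrite /C; lra.
have bform_uz : bform M u z = sqnorm z by [].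
have bform_zz : bform M z z <= (C - 1) * sqnorm z.
  apply: le_trans (ler_norm _) _; apply: le_trans (norm_bform_le _ _ _) _.
  by rewrite /C; lra.
have := M_ge0 (C *: u + (- 1) *: z).
rewrite !bformDl !bformDr !bformZl !bformZr (bform_sym z u symM) bform_uz.
move: (sqnorm z) (bform M u u) (bform M z z) (sqnorm_ge0 z) bform_zz =>
  n a q n_ge0 q_le expansion_ge0.
rewrite -subr_ge0 -(pmulr_rge0 _ C_gt0); nra.
Qed.

Lemma submx_mulmx_self : (M <= M *m M)%MS.
Proof.
have := mxrank_mul_ker M M; rewrite kermx_cap_eq0 ?addn0 => [rankMM|w].
  by case: (mxrank_leqif_sup (submxMl M M)) => _ <-; rewrite rankMM.
move=> /submxP[a ->] aMM0; apply/eqP; rewrite -sqnorm_eq0.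
by rewrite /sqnorm trmx_mul symM mulmxA aMM0 mul0mx mxE.
Qed.

Lemma bform_coercive : exists2 K : R, 0 < K &
  forall u, (u <= M)%MS -> sqnorm u <= K * bform M u u.
Proof.
have [P MPMM] : exists P, M *m P *m (M *m M) = M.
  by exists (pinvmx (M *m M)); apply: mulmxKpV submx_mulmx_self.
set G := P^T *m M.
have MMG : M *m M *m G = M.
  by have := congr1 trmx MPMM; rewrite !trmx_mul symM mulmxA.
set K1 := 2 * mx_l1 (G *m G^T) + 1; set K2 := 2 * mx_l1 M + 1.
have K1_gt0 : 0 < K1 by have := mx_l1_ge0 (G *m G^T); rewrite /K1; lra.
exists (K1 * K2) => [|_ /submxP[a ->]].
  by apply: mulr_gt0 => //; have := mx_l1_ge0 M; rewrite /K2; lra.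
have aM_eq : a *m M = a *m M *m M *m G.
  by rewrite -!mulmxA [M *m (M *m G)]mulmxA MMG.
rewrite {1}aM_eq; apply: le_trans (sqnorm_mulmx_le _ _) _.
have := sqnorm_mulmx_le_bform (a *m M); rewrite -[K1 * K2 * _]mulrA -/K2 /K1.
move: (K2 * _) (sqnorm _) (mx_l1_ge0 (G *m G^T)) (sqnorm_ge0 (a *m M *m M)).
by move: (mx_l1 (G *m G^T)) => l b n; nra.
Qed.
End NonnegativeForm.

Lemma bform_ge0_of_pos_on (N V : 'M[R]_m) : N^T = N ->
  (forall u, (u <= V)%MS -> u != 0 -> 0 < bform N u u) ->
  (\rank N <= \rank V)%N -> forall v, 0 <= bform N v v.
Proof.
move=> symN N_gt0 rankNV v.
have capV0 : \rank (V :&: kermx N)%MS = 0%N.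
  apply: kermx_cap_eq0 => w wV wN0; apply/eqP; apply: contraT => w_neq0.
  by have := N_gt0 w wV w_neq0; rewrite bform_kerl ?ltxx.
have fullVK : row_full (V + kermx N)%MS.
  rewrite /row_full eqn_leq rank_leq_col /=.
  have := mxrank_sum_cap V (kermx N); rewrite capV0 addn0 mxrank_ker => ->.
  by rewrite -(leq_add2r (\rank N)) -addnA subnK ?rank_leq_col // addnC leq_add.
have /sub_addsmxP[[a k] /= ->] := submx_full v fullVK.
have kN0 : k *m kermx N *m N = 0 by rewrite -mulmxA mulmx_ker mulmx0.
rewrite bformDl !bformDr (bform_sym (a *m V) _ symN) !(bform_kerl _ kN0) !addr0.
have [->|aV_neq0] := eqVneq (a *m V) 0.
  by rewrite bform_kerl ?mul0mx.
by apply/ltW/N_gt0; rewrite ?submxMl.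
Qed.

(* With K the coercivity constant of M on its row space, [eps] makes
   4 K |N - M|_1 <= 1, so N stays positive definite there. *)
Lemma bform_ge0_near (M : 'M[R]_m) : M^T = M -> (forall u, 0 <= bform M u u) ->
  exists2 eps : R, 0 < eps & forall N, N^T = N ->
    (forall i j, `|N i j - M i j| < eps) -> (\rank N <= \rank M)%N ->
    forall v, 0 <= bform N v v.
Proof.
move=> symM M_ge0; have [K K_gt0 coercive] := bform_coercive symM M_ge0.
set k : R := (m * m)%:R; have k_ge0 : 0 <= k by rewrite ler0n.
have k1K_neq0 : 4 * K * (k + 1) != 0 by rewrite gt_eqF // !mulr_gt0 ?ltr_wpDl.
set e := (4 * K * (k + 1))^-1.
have e_gt0 : 0 < e by rewrite invr_gt0 !mulr_gt0 ?ltr_wpDl.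
have Ke_eq : 4 * K * e * (k + 1) = 1 by rewrite /e mulrAC mulfV.
exists e => // N symN near rankN.
apply: (bform_ge0_of_pos_on symN _ rankN) => u uM u_neq0.
have s_gt0 : 0 < sqnorm u by rewrite lt_def sqnorm_eq0 u_neq0 sqnorm_ge0.
have dist_le : mx_l1 (N - M) <= k * e.
  by apply: mx_l1_le_entry => i j; rewrite !mxE ltW.
have Kdist_le : 4 * (K * mx_l1 (N - M)) <= 1.
  move: (mx_l1 _) dist_le Ke_eq => l; clearbody e k; clear -K_gt0 e_gt0 k_ge0.
  nra.
have dev_ge : - (mx_l1 (N - M) * (sqnorm u + sqnorm u)) <= bform (N - M) u u.
  rewrite lerNl; apply: le_trans (norm_bform_le _ _ _).
  by rewrite -normrN ler_norm.
have := coercive u uM; rewrite bformBl in dev_ge.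
move: (bform N u u) (bform M u u) (mx_l1 (N - M)) (sqnorm u) dev_ge Kdist_le
  s_gt0 (mx_l1_ge0 (N - M)) => b b0 l s; nra.
Qed.
End QuadraticForms.

Lemma psdE (R : realType) m (M : 'M[R]_m) : psd M <-> forall u, 0 <= bform M u u.
Proof.
by split=> [M_ge0 u|M_ge0 v]; [have := M_ge0 u^T | have := M_ge0 v^T];
  rewrite /bform trmxK.
Qed.

Lemma psd_near_rank_le (R : realType) m (M : 'M[R]_m) : M^T = M -> psd M ->
  exists2 eps : R, 0 < eps & forall N, N^T = N ->
    (forall i j, `|N i j - M i j| < eps) -> (\rank N <= \rank M)%N -> psd N.
Proof.
move=> symM /psdE M_ge0; have [eps eps_gt0 near] := bform_ge0_near symM M_ge0.
by exists eps => // N symN NM rankN; apply/psdE/near.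
Qed.

Section Pencil.
Variables (R : realType) (m n : nat) (A : 'I_n.+1 -> 'M[rat]_m).

Lemma pencil_sym (x : 'rV[R]_n) :
  (forall i, sym_rat (A i)) -> (pencil A x)^T = pencil A x.
Proof.
move=> symA; rewrite /pencil linearD linear_sum /= map_trmx symA; congr (_ + _).
by apply: eq_bigr => i _; rewrite linearZ /= map_trmx symA.
Qed.

Lemma pencilB (x y : 'rV[R]_n) j k :
  pencil A x j k - pencil A y j k =
  \sum_(i < n) (x 0 i - y 0 i) * ratr (A (lift ord0 i) j k).
Proof.
rewrite !mxE !summxE opprD addrACA subrr add0r -sumrB.
by apply: eq_bigr => i _; rewrite !mxE mulrBl.
Qed.

Lemma pencil_near (y : 'rV[R]_n) (eps : R) : 0 < eps ->
  exists2 e : R, 0 < e & forall x : 'rV[R]_n, (forall i, `|x 0 i - y 0 i| < e) ->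
    forall j k, `|pencil A x j k - pencil A y j k| < eps.
Proof.
move=> eps_gt0.
set T := \sum_(i < n) mx_l1 (map_mx ratr (A (lift ord0 i)) : 'M[R]_m).
have T_ge0 : 0 <= T by apply: sumr_ge0 => i _; apply: mx_l1_ge0.
have T1_gt0 : 0 < T + 1 by rewrite ltr_wpDl.
exists (eps / (T + 1)) => [|x near j k]; first by rewrite divr_gt0.
rewrite pencilB; apply: le_lt_trans (ler_norm_sum _ _ _) _.
apply: (@le_lt_trans _ _ (eps / (T + 1) * T)).
  rewrite mulr_sumr; apply: ler_sum => i _; rewrite normrM.
  apply: ler_pM; [exact: normr_ge0 | exact: normr_ge0 | exact: ltW |].
  by have := norm_entry_le_mx_l1 (map_mx ratr (A (lift ord0 i)) : 'M[R]_m) j k;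
    rewrite mxE.
by rewrite mulrAC ltr_pdivrMr // ltr_pM2l // ltrDl.
Qed.
End Pencil.

Theorem theorem1 (R : realType) (m n r : nat) (A : 'I_n.+1 -> 'M[rat]_m)
  (c : 'rV[rat]_n) (p : nat) :
  (1 <= m)%N -> (1 <= n)%N -> (r <= m)%N ->
  (forall i, sym_rat (A i)) ->
  (exists x : 'rV[R]_n, F_r A c r x) ->
  R_r R A c r p ->
  forall xs : 'rV[R]_n, F_r A c r xs -> \rank (pencil A xs) = p ->
    local_min c (fun x => (\rank (pencil A x) <= p)%N) xs.
Proof.
move=> _ _ _ symA _ [le_pr _] xs [[xs_psd _] xs_min] rank_xs.
split; first by rewrite rank_xs.
have [eps eps_gt0 near_psd] := psd_near_rank_le (pencil_sym xs symA) xs_psd.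
have [e e_gt0 near_pencil] := pencil_near A xs eps_gt0.
exists e => // x near_x rank_x; apply: xs_min; split.
  by apply: near_psd; [apply: pencil_sym | apply: near_pencil | rewrite rank_xs].
exact: leq_trans rank_x le_pr.
Qed.
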